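(* Let $G$ be an unweighted graph (all edges have equal weight) that is not a multigraph and is $2$-connected, and let $s, d$ be a source-destination pair. Suppose a forwarding subgraph (FS) uses the shortest path $P(s,d)$ between $s$ and $d$ as the primary path and can avoid any single link failure along the primary path. Then the number of edges in the FS is at least $\left\lceil \dfrac{5|P(s,d)|}{2} \right\rceil$, where $|P(s,d)|$ is the number of edges of $P(s,d)$. Moreover, there exist graphs for which this bound is tight.
   Context: A forwarding subgraph (FS) is a directed acyclic subgraph of the network graph specifying the paths a packet may take from source $s$ to destination $d$. It contains a designated primary path from $s$ to $d$. ''Avoiding any single link failure along the primary path'' means that for every node $v_i$ on the primary path, the FS contains an alternate path from $v_i$ to $d$ that does not use $v_i$'s outgoing primary-path link. Throughout, the graph is assumed not to be a multigraph and to be $2$-connected. *)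

From mathcomp Require Import all_boot.
Set Implicit Arguments. Unset Strict Implicit. Unset Printing Implicit Defensive.

Definition simple_graph (T : finType) (e : rel T) : Prop :=
  symmetric e /\ irreflexive e.

Definition del_vertex (T : finType) (e : rel T) (v : T) : rel T :=
  [rel x y | [&& e x y, x != v & y != v]].

Definition two_connected (T : finType) (e : rel T) : Prop :=
  [/\ 2 < #|T|,
      (forall x y : T, connect e x y) &
      (forall v x y : T, x != v -> y != v -> connect (del_vertex e v) x y)].

(* A walk s :: p in G from s to d; its number of edges is size p. *)
Definition walk (T : finType) (e : rel T) (s d : T) (p : seq T) : bool :=
  path e s p && (last s p == d).

Definition shortest_path (T : finType) (e : rel T) (s d : T) (p : seq T) : Prop :=
  walk e s d p /\ forall q : seq T, walk e s d q -> size p <= size q.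

Definition uses_link (T : finType) (x : T) (q : seq T) (a b : T) : bool :=
  has (fun pr : T * T => (pr == (a, b)) || (pr == (b, a))) (zip (x :: q) q).

(* A forwarding subgraph F (set of directed arcs) of G from s to d with
   primary path s :: p: every arc is an (oriented) edge of G, F is acyclic,
   and F contains the primary path. *)
Definition forwarding_subgraph (T : finType) (e : rel T) (F : rel T)
    (s d : T) (p : seq T) : Prop :=
  [/\ (forall x y, F x y -> e x y),
      (forall x y, F x y -> ~~ connect F y x) &
      walk F s d p].

(* Avoiding any single link failure along the primary path s = v_0, ..., v_n = d:
   for every i < n, F contains a path from v_i to d not using the link
   (v_i, v_{i+1}). *)
Definition avoids_single_link_failure (T : finType) (F : rel T)
    (s d : T) (p : seq T) : Prop :=
  forall i, i < size p ->
    exists q : seq T,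
      walk F (nth s (s :: p) i) d q &&
      ~~ uses_link (nth s (s :: p) i) q (nth s (s :: p) i) (nth s p i).

Definition fs_size (T : finType) (F : rel T) : nat :=
  #|[set a : T * T | F a.1 a.2]|.

Definition ceil_5half (k : nat) : nat := (5 * k).+1 %/ 2.

From mathcomp Require Import all_boot zify.
Set Implicit Arguments. Unset Strict Implicit. Unset Printing Implicit Defensive.

(* Let s = v_0, ..., v_n = d be the primary path. Every v_i with i < n has two
   out-arcs in the FS: its primary arc and the first arc of a detour avoiding it.
   As the primary path is a shortest path, dist(v_i, d) = n - i, and the detour
   from v_i must leave the primary path through a vertex with an out-arc whose
   distance to d is n - i - 1 or n - i.  These branch vertices therefore meet every
   pair of consecutive distances in 1..n, so there are at least ceil(n/2) of them,
   and the FS has at least 2n + ceil(n/2) = ceil(5n/2) arcs.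
   Equality holds on a cycle of length 5m + 2 with chords {3j, 3j+2} and
   {3j+1, 3j+3}: the primary path 0, 1, 3, 4, ..., 3m alternates cycle edges and
   chords, and all the detours run along the cycle up to 3m. *)

Section WalkDistance.
Variables (T : finType) (e : rel T) (d : T) (N : nat).

(* Length of a shortest walk to [d], or [N] if there is no walk shorter than [N]. *)
Definition walk_dist (x : T) : nat :=
  find (fun k => [exists t : k.-tuple T, walk e x d t]) (iota 0 N).

Lemma walk_dist_le x q : walk e x d q -> walk_dist x <= size q.
Proof.
move=> w; rewrite /walk_dist; case: (ltnP (size q) N) => hq; last first.
  by apply: leq_trans (find_size _ _) _; rewrite size_iota.
rewrite -ltnS; apply: find_ltn; apply/hasP; exists (size q).
  by rewrite take_iota mem_iota /=; lia.
by apply/existsP; exists (in_tuple q).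
Qed.

Lemma walk_dist_le_cap x : walk_dist x <= N.
Proof. by apply: leq_trans (find_size _ _) _; rewrite size_iota. Qed.

Lemma walk_dist_witness x :
  walk_dist x < N -> exists2 q, walk e x d q & size q = walk_dist x.
Proof.
move=> lt_dist_N.
have has_walk : has (fun k => [exists t : k.-tuple T, walk e x d t]) (iota 0 N).
  by rewrite has_find size_iota.
have := nth_find 0 has_walk; rewrite nth_iota // add0n => /existsP [t wt].
by exists (val t); rewrite ?size_tuple.
Qed.

Lemma walk_dist_ge x k :
  (forall q, walk e x d q -> k <= size q) -> k <= N -> k <= walk_dist x.
Proof.
move=> short le_k_N; case: (ltnP (walk_dist x) N) => [|le_N_dist].
  by case/walk_dist_witness => q /short le_k <-.
exact: leq_trans le_N_dist.
Qed.

Lemma walk_dist_edge x y : e x y -> walk_dist x <= (walk_dist y).+1.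
Proof.
move=> exy; case: (ltnP (walk_dist y) N) => [/walk_dist_witness [q /andP [pq lq] <-]|h].
  by apply: (@walk_dist_le x (y :: q)); rewrite /walk /= exy pq.
exact: leq_trans (walk_dist_le_cap x) (leqW h).
Qed.

Lemma walk_dist_target : walk_dist d = 0.
Proof. by apply/eqP; rewrite -leqn0 (@walk_dist_le d [::]) // /walk /=. Qed.

Lemma walk_dist_eq0 x : 0 < N -> walk_dist x = 0 -> x = d.
Proof.
move=> N_gt0 dist0; have [|q /andP [_ /eqP <-]] := @walk_dist_witness x.
  by rewrite dist0.
by rewrite dist0; case: q.
Qed.

End WalkDistance.

Lemma last_take_nth (T : Type) (x : T) s i :
  i <= size s -> last x (take i s) = nth x (x :: s) i.
Proof.
elim: s x i => [|y s IH] x [|i] //= le_i_s.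
by rewrite IH // (set_nth_default y).
Qed.

Lemma walk_take_cat (T : finType) (e : rel T) (s d : T) p i q :
  i <= size p -> path e s p -> walk e (nth s (s :: p) i) d q ->
  walk e s d (take i p ++ q).
Proof.
move=> le_i_p; rewrite -{1}(cat_take_drop i p) cat_path => /andP [pt _] /andP [pq lq].
by rewrite /walk cat_path last_cat last_take_nth // pt pq.
Qed.

Lemma walk_drop (T : finType) (e : rel T) (s d : T) p i :
  i <= size p -> walk e s d p -> walk e (nth s (s :: p) i) d (drop i p).
Proof.
move=> le_i_p; rewrite /walk -{1 2}(cat_take_drop i p) cat_path last_cat.
by rewrite last_take_nth // => /andP [/andP [_ ->]].
Qed.

Lemma path_has_successor (T : eqType) (e : rel T) x q y :
  path e x q -> y \in q -> y != last x q -> exists z, e y z.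
Proof.
move=> pq /splitPr sp; case: sp pq => q1 q2; rewrite cat_path last_cat /=.
case/andP=> _ /andP [_]; case: q2 => [|z q2] /=; first by rewrite eqxx.
by case/andP=> eyz _ _; exists z.
Qed.

Lemma path_ivt (T : eqType) (e : rel T) (f : T -> nat) x q m :
  (forall u w, e u w -> f u <= (f w).+1) -> path e x q ->
  f (last x q) <= m -> m < f x -> exists2 y, y \in q & f y = m.
Proof.
move=> lip; elim: q x => [|y q IH] x /=; first by move=> _; lia.
case/andP => exy pq lq lt_m_fx; case: (leqP (f y) m) => fy.
  exists y; rewrite ?mem_head //; have := lip _ _ exy; lia.
by have [z zq fz] := IH y pq lq fy; exists z; rewrite // in_cons zq orbT.
Qed.

Lemma count_iota1_ge_half (P : pred nat) n :
  ~~ P 0 -> (forall k, k < n -> P k || P k.+1) -> n.+1 %/ 2 <= count P (iota 1 n).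
Proof.
move=> notP0; elim: n {-2}n (leqnn n) => [|B IH] [|[|n]] le_n_B cover //.
  by have := cover 0 isT; rewrite (negbTE notP0) /= => ->.
rewrite -[n.+2]addn2 iotaD count_cat /= addnC add1n.
have := IH n (ltac:(lia)) (fun k lt_k_n => cover k (ltac:(lia))).
have := cover n.+1 (ltac:(lia)); case: (P n.+1); case: (P n.+2) => //= _; lia.
Qed.

Lemma fs_size_outdeg (T : finType) (F : rel T) :
  fs_size F = \sum_x #|[set y | F x y]|.
Proof.
rewrite /fs_size -sum1_card.
rewrite (eq_bigr (fun x => \sum_(y in [set y | F x y]) 1)) => [|x _]; last by rewrite sum1_card.
by rewrite pair_big_dep; apply: eq_bigl => [[x y]]; rewrite !inE.
Qed.

Lemma sum_mem_card (T : finType) (A : {pred T}) : \sum_x (x \in A) = #|A|.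
Proof. by rewrite -sum1_card [RHS]big_mkcond; apply: eq_bigr => x _; case: (x \in A). Qed.

Section LowerBound.
Variables (T : finType) (e F : rel T) (s d : T) (p : seq T).
Hypotheses (sp : shortest_path e s d p) (fsF : forwarding_subgraph e F s d p)
  (avoid : avoids_single_link_failure F s d p).

Local Notation n := (size p).
Local Notation v i := (nth s (s :: p) i).
Local Notation dist := (walk_dist e d n.+1).

Lemma dist_path_vertex i : i <= n -> dist (v i) = n - i.
Proof.
have [wp short] := sp; have /andP [pp _] := wp.
move=> le_i_n; apply/eqP; rewrite eqn_leq; apply/andP; split.
  by rewrite -(size_drop i p) walk_dist_le // walk_drop.
apply: walk_dist_ge => [q wq|]; last lia.
by have := short _ (walk_take_cat le_i_n pp wq); rewrite size_cat size_takel //; lia.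
Qed.

Lemma path_vertex_inj i j : i <= n -> j <= n -> v i = v j -> i = j.
Proof.
move=> le_i_n le_j_n eq_v; have := dist_path_vertex le_i_n.
by rewrite eq_v dist_path_vertex //; lia.
Qed.

Lemma path_vertex_index x : x \in s :: p -> exists2 i, i <= n & x = v i.
Proof. by move=> xp; exists (index x (s :: p)); rewrite ?nth_index // -ltnS index_mem. Qed.

Lemma path_target_mem : d \in s :: p.
Proof. by case: sp => /andP [_ /eqP <-] _; rewrite mem_last. Qed.

Lemma dist_neighbor i x : i <= n -> e (v i) x -> n <= dist x + i.+1.
Proof.
move=> le_i_n exi; case: (ltnP (dist x) n.+1) => [/walk_dist_witness [q wq <-]|]; last lia.
have [/andP [pp _] short] := sp.
have wxq : walk e (v i) d (x :: q) by move: wq; rewrite /walk /= exi.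
by have := short _ (walk_take_cat le_i_n pp wxq); rewrite size_cat size_takel //=; lia.
Qed.

Lemma detour_first_arc i : i < n ->
  exists x q, [/\ F (v i) x, x != nth s p i, path F x q & last x q = d].
Proof.
move=> lt_i_n; have [[|x q] /andP [/andP [/= pq /eqP lq] no_link]] := avoid lt_i_n.
  by have := dist_path_vertex (ltnW lt_i_n); rewrite lq walk_dist_target; lia.
case/andP: pq => Fvx pq; exists x, q; split => //.
by apply: contraNneq no_link => ->; rewrite /uses_link /= eqxx.
Qed.

Definition branch_vertices : {set T} :=
  [set x | (x \notin s :: p) && [exists z, F x z]].

Lemma detour_branch i : i < n -> exists2 w, w \in branch_vertices &
  (dist w == n - i.+1) || (dist w == n - i).
Proof.
move=> lt_i_n; have [x [q [Fvx x_ne pq lq]]] := detour_first_arc lt_i_n.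
have [Fe acyc _] := fsF.
have pxq : path F (v i) (x :: q) by rewrite /= Fvx.
have no_return y : y \in x :: q -> y != v i.
  by move=> yq; apply: contraTneq (path_connect pq yq) => ->; apply: acyc.
have branching y : y \in x :: q -> y \notin s :: p -> y \in branch_vertices.
  move=> yq y_off; rewrite inE y_off; apply/existsP.
  apply: (path_has_successor pxq yq); rewrite /= lq.
  by apply: contraNneq y_off => ->; apply: path_target_mem.
have x_off : n - i.+1 <= dist x <= n - i -> x \notin s :: p.
  move=> dist_x; apply/negP => /path_vertex_index [j le_j_n x_vj].
  have ne_ji : j <> i.
    by move=> eq_ji; have := no_return _ (mem_head x q); rewrite x_vj eq_ji eqxx.
  have ne_jSi : j <> i.+1 by move=> eq_j; move: x_ne; rewrite x_vj eq_j /= eqxx.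
  by move: dist_x; rewrite x_vj dist_path_vertex //; lia.
case: (leqP (dist x) (n - i)) => dist_x.
  have dist_x_range : n - i.+1 <= dist x <= n - i.
    by move: dist_x (dist_neighbor (ltnW lt_i_n) (Fe _ _ Fvx)); lia.
  exists x; first exact: branching (mem_head x q) (x_off dist_x_range).
  by move: dist_x_range; lia.
have lip u w : F u w -> dist u <= (dist w).+1 by move/Fe; apply: walk_dist_edge.
have [|y yq dist_y] := path_ivt lip pq _ dist_x; first by rewrite lq walk_dist_target.
have yxq : y \in x :: q by rewrite in_cons yq orbT.
exists y; last by rewrite dist_y eqxx orbT.
apply: (branching _ yxq); apply/negP => /path_vertex_index [j le_j_n y_vj].
have /eqP := no_return y yxq; apply; rewrite y_vj; congr nth.
by move: dist_y; rewrite y_vj dist_path_vertex //; lia.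
Qed.

Lemma card_branch_vertices : n.+1 %/ 2 <= #|branch_vertices|.
Proof.
pose P := mem [seq dist w | w <- enum branch_vertices].
have notP0 : ~~ P 0.
  apply/mapP => -[w]; rewrite mem_enum inE => /andP [w_off _] /esym /walk_dist_eq0.
  by move=> /(_ isT) w_d; move: w_off; rewrite w_d path_target_mem.
have cover k : k < n -> P k || P k.+1.
  move=> lt_k_n; have [w wb dist_w] := detour_branch (ltac:(lia) : n - k.+1 < n).
  have Pw : P (dist w) by apply: map_f; rewrite mem_enum.
  by case/orP: dist_w => /eqP dist_w; apply/orP; [left | right];
    move: Pw; rewrite dist_w; congr (P _); lia.
apply: leq_trans (count_iota1_ge_half notP0 cover) _.
rewrite -size_filter cardE -(size_map dist (enum _)); apply: uniq_leq_size.
  exact/filter_uniq/iota_uniq.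
by move=> k; rewrite mem_filter => /andP [].
Qed.

Lemma outdeg_path_vertex i : i < n -> 2 <= #|[set y | F (v i) y]|.
Proof.
move=> lt_i_n; have [x [_ [Fvx x_ne _ _]]] := detour_first_arc lt_i_n.
have [_ _ /andP [/(pathP s) Fp _]] := fsF.
have sub : [set x; nth s p i] \subset [set y | F (v i) y].
  by apply/subsetP => y; rewrite !inE => /orP [] /eqP ->; [|apply: Fp].
by apply: leq_trans (subset_leq_card sub); rewrite cards2 x_ne.
Qed.

Theorem fs_size_lower_bound : ceil_5half n <= fs_size F.
Proof.
pose V := [set v (val i) | i : 'I_n].
have card_V : #|V| = n.
  rewrite card_imset ?card_ord // => i j /path_vertex_inj eq_ij.
  by apply: val_inj; apply: eq_ij; apply: ltnW; apply: ltn_ord.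
rewrite fs_size_outdeg.
apply: (@leq_trans (\sum_x (2 * (x \in V) + (x \in branch_vertices)))); last first.
  apply: leq_sum => x _; case: (boolP (x \in V)) => [/imsetP [i _ ->]|_].
    have -> : (v i \in branch_vertices) = false by rewrite in_set mem_nth //= ltnS ltnW.
    exact: (outdeg_path_vertex (ltn_ord i)).
  rewrite muln0; case: (boolP (x \in branch_vertices)) => //.
  by rewrite inE => /andP [_ /existsP [z Fxz]]; rewrite card_gt0; apply/set0Pn; exists z; rewrite inE.
rewrite big_split -big_distrr /= !sum_mem_card card_V.
by have := card_branch_vertices; rewrite /ceil_5half; lia.
Qed.

End LowerBound.

Lemma inord_eqE n (v : 'I_n.+1) i : i <= n -> (inord i == v) = (i == v).
Proof. by move=> le_i_n; rewrite -(inj_eq val_inj) /= inordK. Qed.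

Lemma connect_inord_seg n (R : rel 'I_n.+1) a c : a <= c <= n ->
  (forall i, a <= i < c -> R (inord i) (inord i.+1)) -> connect R (inord a) (inord c).
Proof.
elim: c => [|c IH] /andP [le_ac le_cn] step; first by rewrite leqn0 in le_ac; rewrite (eqP le_ac).
case: (ltnP c a) => [lt_ca|le_ca]; first by have -> : a = c.+1 by lia.
apply: connect_trans (connect1 (step c _)); last lia.
by apply: IH => [|i le_aic]; [lia | apply: step; lia].
Qed.

Lemma two_connected_cycle n (e : rel 'I_n.+1) : 1 < n -> symmetric e ->
  (forall i, i < n -> e (inord i) (inord i.+1)) -> e (inord n) (inord 0) ->
  two_connected e.
Proof.
move=> n_gt1 e_sym e_succ e_wrap; split; first by rewrite card_ord.
  have from0 z : connect e (inord 0) z.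
    rewrite -(inord_val z); apply: connect_inord_seg => [|i /andP [_ lt_iz]].
      exact: leq_ord.
    exact/e_succ/(leq_trans lt_iz)/leq_ord.
  by move=> x y; apply: connect_trans (from0 y); rewrite sym_connect_sym.
move=> v x y x_v y_v; set D := del_vertex e v.
have D_sym : symmetric D.
  by move=> a c; rewrite /D /del_vertex /= e_sym; case: (a != v); rewrite ?andbF ?andbT.
have D_seg a c : a <= c <= n -> (forall i, a <= i <= c -> i != v) ->
    connect D (inord a) (inord c).
  move=> le_acn avoid_v; apply: connect_inord_seg => // i le_aic.
  rewrite /D /del_vertex /= e_succ ?inord_eqE ?avoid_v //; lia.
pose h := if v == 0 :> nat then 1 else 0.
have to_h z : z != v -> connect D (inord h) z.
  rewrite -(inj_eq val_inj) => /= z_v; rewrite -(inord_val z) /h.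
  have le_zn := leq_ord z; have le_vn := leq_ord v.
  case: eqP => [v0|/eqP v_ne0]; first by apply: D_seg => [|i]; lia.
  case: (ltnP z v) => [lt_zv|le_vz]; first by apply: D_seg => [|i]; lia.
  rewrite (sym_connect_sym D_sym); apply: connect_trans (D_seg z n _ _) _; try lia.
  apply: connect1; rewrite /D /del_vertex /= e_wrap !inord_eqE //; lia.
by have := to_h x x_v; rewrite sym_connect_sym // => /connect_trans; apply; apply: to_h.
Qed.

Lemma path_iota_succ (R : rel nat) a n :
  (forall i, a <= i < a + n -> R i i.+1) -> path R a (iota a.+1 n).
Proof.
elim: n a => [|n IH] a step //=; rewrite step ?IH //; last lia.
by move=> i le_i; apply: step; lia.
Qed.

Lemma last_iota a n : last a (iota a.+1 n) = a + n.
Proof. by elim: n a => [|n IH] a /=; rewrite ?addn0 // IH addnS. Qed.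

Lemma path_lipschitz (T : Type) (R : rel T) (f : T -> nat) x q :
  (forall u w, R u w -> f w <= (f u).+1) -> path R x q ->
  f (last x q) <= f x + size q.
Proof.
move=> lip; elim: q x => [|y q IH] x /=; first by rewrite addn0.
by case/andP=> /lip Rxy /IH; lia.
Qed.

Lemma connect_rank_le (T : finType) (R : rel T) (f : T -> nat) x y :
  (forall u w, R u w -> f u < f w) -> connect R x y -> f x <= f y.
Proof.
move=> incr /connectP [q + ->]; elim: q x => //= z q IH x /andP [/incr lt_xz /IH].
exact/leq_trans/ltnW.
Qed.

Lemma uses_link_from (T : finType) (x y z : T) q :
  x \notin z :: q -> uses_link x (z :: q) x y -> z = y.
Proof.
have later_step u r : has (fun pr => (pr == (x, y)) || (pr == (y, x))) (zip (u :: r) r) ->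
    x \in u :: r.
  elim: r u => //= w r IH u; rewrite !xpair_eqE in_cons.
  case/orP => [/orP [/andP [/eqP -> _]|/andP [_ /eqP ->]]|/IH ->]; rewrite ?eqxx ?orbT //.
  by rewrite in_cons eqxx orbT.
move=> x_off; rewrite /uses_link /= !xpair_eqE eqxx /=.
case/orP => [/orP [/eqP //|/andP [_ /eqP zx]]|/later_step]; last by rewrite (negbTE x_off).
by rewrite zx mem_head in x_off.
Qed.

Section TightExample.
Variable m : nat.
Hypothesis m_gt0 : 0 < m.
Local Notation N := (5 * m).+2.

Definition example_arc (x y : nat) : bool :=
  [|| y == x.+1, (x == (5 * m).+1) && (y == 0) | [&& x < 3 * m, x %% 3 != 2 & y == x + 2]].

Definition example_graph : rel 'I_N := fun x y => example_arc x y || example_arc y x.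

(* [zigzag k] is the k-th vertex of the path 0, 1, 3, 4, 6, 7, ..., 3m. *)
Definition zigzag (k : nat) : nat := 3 * (k %/ 2) + k %% 2.
Definition zigzag_vertex (k : nat) : 'I_N := inord (zigzag k).

Lemma zigzag_vertexK k : k <= 2 * m -> zigzag_vertex k = zigzag k :> nat.
Proof. by move=> le_k; rewrite inordK // /zigzag; lia. Qed.

Lemma example_graph_simple : simple_graph example_graph.
Proof.
split; first by move=> x y; rewrite /example_graph orbC.
by move=> x; rewrite /example_graph /example_arc orbb; lia.
Qed.

Lemma example_graph_two_connected : two_connected example_graph.
Proof.
apply: two_connected_cycle => [|x y|i lt_i|]; first lia.
- by rewrite /example_graph orbC.
- by rewrite /example_graph /example_arc !inordK ?eqxx //; lia.
- by rewrite /example_graph /example_arc !inordK ?eqxx ?orbT.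
Qed.

(* A lower bound for the distance from 0 in [example_graph]: it changes by at most
   one along an edge and equals [2m] at [3m]. *)
Definition example_dist0 (x : nat) : nat :=
  minn (2 * (x %/ 3) + (x %% 3 != 0)) ((5 * m).+2 - x).

Lemma example_dist0_edge x y :
  example_graph x y -> example_dist0 y <= (example_dist0 x).+1.
Proof.
have := ltn_ord x; have := ltn_ord y.
by rewrite /example_graph /example_arc /example_dist0; lia.
Qed.

Section PrimaryPath.
Variable b : nat.
Hypothesis b_le1 : b <= 1.

Definition example_fs_arc (x y : nat) : bool :=
  [&& b <= x, x < 3 * m & (y == x.+1) || (x %% 3 != 2) && (y == x + 2)].

Definition example_fs : rel 'I_N := fun x y => example_fs_arc x y.

Definition example_primary : seq 'I_N := map zigzag_vertex (iota b.+1 (2 * m - b)).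

Local Notation s := (zigzag_vertex b).
Local Notation d := (zigzag_vertex (2 * m)).

Lemma example_source_target_neq : s != d.
Proof. by rewrite -(inj_eq val_inj) /= !zigzag_vertexK /zigzag; lia. Qed.

Lemma example_fs_graph x y : example_fs x y -> example_graph x y.
Proof. by rewrite /example_fs /example_fs_arc /example_graph /example_arc; lia. Qed.

Lemma example_fs_acyclic x y : example_fs x y -> ~~ connect example_fs y x.
Proof.
have incr u w : example_fs u w -> (u : nat) < w by rewrite /example_fs /example_fs_arc; lia.
by move=> /incr lt_xy; apply/negP => /(connect_rank_le incr); lia.
Qed.

Lemma example_primary_size : size example_primary = 2 * m - b.
Proof. by rewrite size_map size_iota. Qed.

Lemma example_primary_nth i : i <= 2 * m - b ->
  nth s (s :: example_primary) i = zigzag_vertex (b + i).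
Proof.
have -> : s :: example_primary = map zigzag_vertex (iota b (2 * m - b).+1) by [].
by move=> le_i; rewrite (nth_map b) ?nth_iota // size_iota.
Qed.

Lemma example_fs_inord i j : i < N -> j < N ->
  example_fs (inord i) (inord j) = example_fs_arc i j.
Proof. by move=> lt_i lt_j; rewrite /example_fs !inordK. Qed.

Lemma example_primary_walk : walk example_fs s d example_primary.
Proof.
apply/andP; split.
  rewrite path_map; apply: path_iota_succ => i /andP [le_bi lt_i].
  by rewrite /= example_fs_inord /example_fs_arc /zigzag; lia.
rewrite -(take_size example_primary) last_take_nth // example_primary_nth example_primary_size //.
by rewrite subnKC //; lia.
Qed.

Lemma example_primary_shortest : shortest_path example_graph s d example_primary.
Proof.
split; first by have /andP [ps ls] := example_primary_walk;
  rewrite /walk ls (sub_path example_fs_graph).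
move=> q /andP [pq /eqP lq]; have := path_lipschitz example_dist0_edge pq.
have zig_s : zigzag b = b by rewrite /zigzag; lia.
have zig_d : zigzag (2 * m) = 3 * m by rewrite /zigzag; lia.
rewrite lq example_primary_size !zigzag_vertexK ?zig_s ?zig_d /example_dist0; try lia.
by move: (size q); lia.
Qed.

Lemma example_forwarding : forwarding_subgraph example_graph example_fs s d example_primary.
Proof. by split; [exact: example_fs_graph | exact: example_fs_acyclic | exact: example_primary_walk]. Qed.

Lemma example_avoids : avoids_single_link_failure example_fs s d example_primary.
Proof.
move=> i; rewrite example_primary_size => lt_i.
rewrite example_primary_nth ?(ltnW lt_i) // -[nth _ _ i]/(nth s (s :: example_primary) i.+1).
rewrite example_primary_nth //.
(* The detour from [zigzag k] takes its other out-arc, to [a], then follows the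
   cycle up to [3m]. *)
set k := b + i; set a := 3 * (k %/ 2) + 2.
have lt_k : k < 2 * m by rewrite /k; lia.
have lt_zk : zigzag k < a by rewrite /zigzag /a; lia.
exists (map inord (iota a (3 * m - a).+1)); apply/andP; split.
  rewrite /walk /= path_map last_map last_iota /zigzag_vertex example_fs_inord; try lia.
  apply/andP; split; [apply/andP; split|].
  - by rewrite /example_fs_arc /zigzag /a; lia.
  - by apply: path_iota_succ => j le_j; rewrite /= example_fs_inord /example_fs_arc; lia.
  - by rewrite /zigzag; apply/eqP; congr inord; lia.
have notin : zigzag_vertex k \notin map inord (iota a (3 * m - a).+1).
  apply/mapP => -[j]; rewrite mem_iota => le_j /(congr1 (@nat_of_ord _)).
  by rewrite /= !inordK; lia.
apply/negP => /(uses_link_from notin) /(congr1 (@nat_of_ord _)).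
by rewrite /zigzag_vertex !inordK /zigzag; lia.
Qed.

Lemma example_fs_outdeg x :
  #|[set y | example_fs x y]| = ((b <= x) && (x < 3 * m)) * (2 - (x %% 3 == 2)).
Proof.
have lt_xN := ltn_ord x.
have [in_range|] := boolP ((b <= x) && (x < 3 * m)); last first.
  rewrite mul0n => out_range; apply/eqP; rewrite cards_eq0; apply/eqP/setP => y.
  by rewrite !inE /example_fs /example_fs_arc; apply: negbTE; lia.
case: (eqVneq (x %% 3) 2) => x_mod.
  have -> : [set y | example_fs x y] = [set inord x.+1].
    apply/setP => y; rewrite !inE [RHS]eq_sym inord_eqE; last lia.
    by rewrite /example_fs /example_fs_arc; lia.
  by rewrite cards1.
have -> : [set y | example_fs x y] = [set inord x.+1; inord (x + 2)].
  apply/setP => y; rewrite !inE ![y == _]eq_sym !inord_eqE; try lia.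
  by rewrite /example_fs /example_fs_arc; lia.
by rewrite cards2 inord_eqE ?inordK; lia.
Qed.

Lemma example_fs_size : fs_size example_fs = 5 * m - 2 * b.
Proof.
rewrite fs_size_outdeg; under eq_bigr do rewrite example_fs_outdeg.
have sum_prefix n : \sum_(x < n) ((b <= x) && (x < 3 * m)) * (2 - (x %% 3 == 2)) =
    2 * minn n (3 * m) - minn n (3 * m) %/ 3 - 2 * b * (0 < n).
  by elim: n => [|n IH]; rewrite ?big_ord0 ?big_ord_recr /= ?IH; lia.
by rewrite sum_prefix; lia.
Qed.

End PrimaryPath.

End TightExample.

Theorem theorem2 :
  (forall (T : finType) (e : rel T) (s d : T) (p : seq T) (F : rel T),
      simple_graph e -> two_connected e -> s != d ->
      shortest_path e s d p ->
      forwarding_subgraph e F s d p ->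
      avoids_single_link_failure F s d p ->
      ceil_5half (size p) <= fs_size F)
  /\
  (forall k : nat, 0 < k ->
     exists (T : finType) (e : rel T) (s d : T) (p : seq T) (F : rel T),
       [/\ simple_graph e, two_connected e, s != d &
           shortest_path e s d p] /\
       [/\ size p = k, forwarding_subgraph e F s d p,
           avoids_single_link_failure F s d p &
           fs_size F = ceil_5half k]).
Proof.
split=> [T e s d p F _ _ _|k k_gt0]; first exact: fs_size_lower_bound.
pose m := k.+1 %/ 2; pose b := k %% 2.
have m_gt0 : 0 < m by rewrite /m; lia.
have b_le1 : b <= 1 by rewrite /b; lia.
exists 'I_(5 * m).+2, (@example_graph m), (@zigzag_vertex m b), (@zigzag_vertex m (2 * m)),
  (@example_primary m b), (@example_fs m b).
split; split.
- exact: example_graph_simple.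
- exact: example_graph_two_connected.
- exact: example_source_target_neq.
- exact: example_primary_shortest.
- by rewrite example_primary_size /m /b; lia.
- exact: example_forwarding.
- exact: example_avoids.
- by rewrite example_fs_size /ceil_5half /m /b; lia.
Qed.
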